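(* Let $L$ be a ladder gadget and let $S_1,S_2$ be two edge sets in which $L$ is in semi-default state. Then there exists a well-behaved flip sequence $(P_1,P_2,P_3,P_4)$ for $L$ of length exactly 4 starting from $S_1$ such that $S_1\triangle P_1\triangle\cdots\triangle P_4$ agrees with $S_2$ on the edges of $L$; moreover, it can be chosen so that $P_1,P_2$ are both from the top or both from the bottom, and $P_3,P_4$ are both from the top or both from the bottom.
   Context: A ladder gadget is the graph on vertices $\{a_0,\dots,a_6\}\cup\{b_0,\dots,b_6\}$ with edges $\{a_ib_i:1\le i\le 5\}\cup\{a_ia_{i+1},b_ib_{i+1}:0\le i\le 5\}$; its inner vertices are $a_1,\dots,a_5,b_1,\dots,b_5$. $L$ is in semi-default state w.r.t. an edge set $S$ (restricted to $L$'s edges) if $S\cap E(L)$ is a perfect matching of the inner vertices, i.e. none of $a_0a_1,b_0b_1,a_5a_6,b_5b_6$ is in $S$ and every inner vertex is covered exactly once by $S\cap E(L)$ (the boundary vertices $a_0,b_0,a_6,b_6$ being matched outside the gadget). A well-behaved path from the bottom is a path in $L$ that starts with edge $a_0a_1$, ends with edge $b_1b_0$, and whose other vertices are inner; a well-behaved path from the top is a path in $L$ starting with $a_6a_5$, ending with $b_5b_6$, with all other vertices inner. A path is alternating w.r.t. $S$ if its consecutive edges alternate between belonging and not belonging to $S$. A well-behaved flip sequence for $L$ starting from $S$ is a sequence $(P_1,\dots,P_d)$ of well-behaved paths with $P_i$ alternating w.r.t. $S\triangle P_1\triangle\cdots\triangle P_{i-1}$. *)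

From mathcomp Require Import all_boot.
Set Implicit Arguments. Unset Strict Implicit. Unset Printing Implicit Defensive.

(* Vertices of the ladder gadget: (false, i) = a_i, (true, i) = b_i, i < 7. *)
Definition lvert := (bool * 'I_7)%type.
Definition av (i : nat) : lvert := (false, inord i).
Definition bv (i : nat) : lvert := (true, inord i).

(* Adjacency: rails a_i a_{i+1}, b_i b_{i+1} (0 <= i <= 5) and rungs a_i b_i (1 <= i <= 5). *)
Definition ladj : rel lvert := fun u v =>
  ((u.1 == v.1) && ((u.2.+1 == v.2 :> nat) || (v.2.+1 == u.2 :> nat)))
  || ((u.1 != v.1) && (u.2 == v.2) && (0 < u.2 < 6)).

Definition inner (v : lvert) : bool := 0 < v.2 < 6.

Definition ledge (u v : lvert) : {set lvert} := [set u; v].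
Definition EL : {set {set lvert}} :=
  [set e | [exists u, exists v, ladj u v && (e == ledge u v)]].

Definition semi_default (S : {set {set lvert}}) : Prop :=
  [/\ ledge (av 0) (av 1) \notin S, ledge (bv 0) (bv 1) \notin S,
      ledge (av 5) (av 6) \notin S, ledge (bv 5) (bv 6) \notin S &
      forall v, inner v -> #|[set e in S :&: EL | v \in e]| = 1].

Definition pedges (p : seq lvert) : seq {set lvert} :=
  [seq ledge x.1 x.2 | x <- zip p (behead p)].
Definition pset (p : seq lvert) : {set {set lvert}} :=
  [set e | e \in pedges p].

Definition lpath (p : seq lvert) : bool :=
  if p is x :: q then path ladj x q && uniq p else false.

Definition wb_bottom (p : seq lvert) : Prop :=
  lpath p /\ exists q, p = [:: av 0, av 1 & q ++ [:: bv 1; bv 0]] /\ all inner q.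
Definition wb_top (p : seq lvert) : Prop :=
  lpath p /\ exists q, p = [:: av 6, av 5 & q ++ [:: bv 5; bv 6]] /\ all inner q.
Definition well_behaved (p : seq lvert) : Prop := wb_bottom p \/ wb_top p.

Definition alternating (S : {set {set lvert}}) (p : seq lvert) : bool :=
  sorted (fun e f => (e \in S) != (f \in S)) (pedges p).

Definition symdiff (A B : {set {set lvert}}) : {set {set lvert}} :=
  (A :\: B) :|: (B :\: A).

Fixpoint wb_flip_seq (S : {set {set lvert}}) (ps : seq (seq lvert)) : Prop :=
  if ps is p :: ps' then
    [/\ well_behaved p, alternating S p & wb_flip_seq (symdiff S (pset p)) ps']
  else True.

Definition apply_flips (S : {set {set lvert}}) (ps : seq (seq lvert)) :=
  foldl (fun T p => symdiff T (pset p)) S ps.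

From mathcomp Require Import all_boot.
Set Implicit Arguments. Unset Strict Implicit. Unset Printing Implicit Defensive.

(* An edge set, restricted to the 17 edges of the ladder, is a bit vector.
   The semi-default states are the bit vectors of the 8 perfect matchings of
   the inner 2 x 5 ladder, and from each side there are five "U-shaped"
   well-behaved paths a_0 a_1 ... a_k b_k ... b_1 b_0 (mirrored for the top).
   Flipping a path acts on bit vectors, so the theorem reduces to a finite
   check: any two matchings are joined by two same-side flips to an
   intermediate state followed by two more same-side flips, which is verified
   by computation. *)

Lemma in_symdiff (A B : {set {set lvert}}) e :
  (e \in symdiff A B) = ((e \in A) != (e \in B)).
Proof. by rewrite /symdiff !inE; case: (e \in A); case: (e \in B). Qed.

(* [av] and [bv] go through [inord], which does not reduce under [vm_compute]. *)
Definition vtx (b : bool) (i : nat) : lvert := (b, Ordinal (ltn_pmod i (isT : 0 < 7))).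

Lemma avE i : i < 7 -> av i = vtx false i.
Proof. by move=> lti; congr pair; apply: val_inj; rewrite /= inordK // modn_small. Qed.

Lemma bvE i : i < 7 -> bv i = vtx true i.
Proof. by move=> lti; congr pair; apply: val_inj; rewrite /= inordK // modn_small. Qed.

Definition lverts : seq lvert := [seq vtx b i | b <- [:: false; true], i <- iota 0 7].

Lemma mem_lverts v : v \in lverts.
Proof.
case: v => b i; have -> : (b, i) = vtx b i by congr pair; apply: val_inj; rewrite /= modn_small.
by apply: (allpairs_f vtx); [case: b | rewrite mem_iota /=].
Qed.

(* Same as [u == v], but evaluated much faster by [vm_compute]. *)
Definition veq (u v : lvert) : bool := (u.1 == v.1) && (u.2 == v.2 :> nat).

Lemma veqE u v : veq u v = (u == v).
Proof. by case: u v => [b i] [c j]. Qed.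

Definition ladder_pairs : seq (lvert * lvert) :=
  [seq (vtx false i, vtx false i.+1) | i <- iota 0 6] ++
  [seq (vtx true i, vtx true i.+1) | i <- iota 0 6] ++
  [seq (vtx false i, vtx true i) | i <- iota 1 5].

Definition same_edge (x y : lvert * lvert) : bool :=
  veq x.1 y.1 && veq x.2 y.2 || veq x.1 y.2 && veq x.2 y.1.

Lemma same_edgeE x y : same_edge x y = (ledge x.1 x.2 == ledge y.1 y.2).
Proof.
case: x y => [u v] [a b]; rewrite /same_edge /ledge /= !veqE.
apply/idP/eqP => [/orP[]/andP[/eqP-> /eqP->] // | E]; first exact: setUC.
have ua : u \in [set a; b] by rewrite -E set21.
have va : v \in [set a; b] by rewrite -E set22.
have au : a \in [set u; v] by rewrite E set21.
have bu : b \in [set u; v] by rewrite E set22.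
move: ua va au bu; rewrite !inE.
by do 4!case/orP=> /eqP ?; subst; rewrite ?eqxx ?orbT.
Qed.

Lemma ladder_pairs_ladj : all (fun x => ladj x.1 x.2) ladder_pairs.
Proof. by vm_compute. Qed.

Lemma ladder_pairs_complete :
  all (fun u => all (fun v => ladj u v ==> has (same_edge (u, v)) ladder_pairs) lverts) lverts.
Proof. by vm_compute. Qed.

Lemma ladder_pairs_distinct : pairwise (fun x y => ~~ same_edge x y) ladder_pairs.
Proof. by vm_compute. Qed.

Lemma has_same_edge u v : ladj u v -> has (same_edge (u, v)) ladder_pairs.
Proof. exact: implyP (allP (allP ladder_pairs_complete u (mem_lverts u)) v (mem_lverts v)). Qed.

Definition ladder_edges : seq {set lvert} := [seq ledge x.1 x.2 | x <- ladder_pairs].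

Lemma uniq_ladder_edges : uniq ladder_edges.
Proof.
rewrite uniq_pairwise pairwise_map; apply: sub_pairwise ladder_pairs_distinct.
by move=> x y /=; rewrite same_edgeE.
Qed.

Lemma mem_EL e : (e \in EL) = (e \in ladder_edges).
Proof.
apply/idP/mapP => [| [x xL ->]].
  rewrite inE => /existsP[u /existsP[v /andP[uv /eqP->]]].
  by case/hasP: (has_same_edge uv) => x xL; rewrite same_edgeE => /eqP->; exists x.
rewrite inE; apply/existsP; exists x.1; apply/existsP; exists x.2.
by rewrite (allP ladder_pairs_ladj x xL) eqxx.
Qed.

Definition edge_bits (S : {set {set lvert}}) : bitseq := [seq e \in S | e <- ladder_edges].

Definition edge_index (x : lvert * lvert) : nat := find (same_edge x) ladder_pairs.
Definition edge_bit (st : bitseq) (x : lvert * lvert) : bool := nth false st (edge_index x).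

Lemma edge_bit_edge_bits S u v : ladj u v -> edge_bit (edge_bits S) (u, v) = (ledge u v \in S).
Proof.
move=> /has_same_edge has_uv; have := nth_find (u, v) has_uv.
rewrite /edge_bit /edge_bits /ladder_edges -map_comp (nth_map (u, v)) -?has_find //=.
by rewrite same_edgeE => /eqP->.
Qed.

Lemma edge_bits_EL S1 S2 : edge_bits S1 = edge_bits S2 -> S1 :&: EL = S2 :&: EL.
Proof.
move=> /eq_in_map eq12; apply/setP => e; rewrite !in_setI mem_EL.
by case: (boolP (e \in ladder_edges)) => [/eq12 /= -> | _]; rewrite ?andbF.
Qed.

Definition steps (p : seq lvert) : seq (lvert * lvert) := zip p (behead p).

Lemma lpath_steps p : lpath p -> all (fun x => ladj x.1 x.2) (steps p).
Proof.
case: p => // x q /andP[+ _]; rewrite /steps /=.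
by elim: q x => //= y q IH x /andP[-> /IH].
Qed.

Definition flip (st : bitseq) (p : seq lvert) : bitseq :=
  [seq bx.1 != has (same_edge bx.2) (steps p) | bx <- zip st ladder_pairs].

Lemma edge_bits_symdiff S p : edge_bits (symdiff S (pset p)) = flip (edge_bits S) p.
Proof.
rewrite /flip /edge_bits /ladder_edges -!map_comp.
rewrite -[X in zip _ X](map_id ladder_pairs) zip_map -map_comp.
apply: eq_map => x /=; rewrite in_symdiff inE -has_pred1 has_map.
by congr (_ != _); apply: eq_has => y /=; rewrite same_edgeE eq_sym.
Qed.

Definition alt (st : bitseq) (p : seq lvert) : bool :=
  sorted (fun x y => edge_bit st x != edge_bit st y) (steps p).

Lemma alternating_edge_bits S p : lpath p -> alternating S p = alt (edge_bits S) p.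
Proof.
move=> /lpath_steps adj; rewrite /alternating /alt /pedges sorted_map.
apply: (eq_in_sorted (P := fun x => ladj x.1 x.2)) adj => -[u v] [a b] /= uv ab.
by rewrite !edge_bit_edge_bits.
Qed.

Definition incident (v : lvert) (x : lvert * lvert) : bool := veq v x.1 || veq v x.2.

Lemma incidentE v x : incident v x = (v \in ledge x.1 x.2).
Proof. by rewrite /incident !veqE in_set2. Qed.

Definition incidence (v : lvert) : seq nat :=
  [seq i <- iota 0 (size ladder_pairs) | incident v (nth (v, v) ladder_pairs i)].

Lemma card_incident_edges S v :
  #|[set e in S :&: EL | v \in e]| = count (nth false (edge_bits S)) (incidence v).
Proof.
have /eq_card-> : [set e in S :&: EL | v \in e] =i [seq e <- ladder_edges | (e \in S) && (v \in e)].
  by move=> e; rewrite in_set in_setI mem_filter mem_EL andbAC.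
move/card_uniqP: (filter_uniq [pred e | (e \in S) && (v \in e)] uniq_ladder_edges) ->.
rewrite size_filter count_map.
rewrite count_filter -[in LHS](mkseq_nth (v, v) ladder_pairs) count_map.
apply: eq_in_count => i; rewrite mem_iota => /andP[_ lti] /=.
by rewrite /edge_bits /ladder_edges -map_comp (nth_map (v, v)) // incidentE.
Qed.

Definition boundary_pairs : seq (lvert * lvert) :=
  [:: (vtx false 0, vtx false 1); (vtx true 0, vtx true 1);
      (vtx false 5, vtx false 6); (vtx true 5, vtx true 6)].

Definition semi_default_bits (boundary : seq nat) (incidences : seq (seq nat)) (st : bitseq) :=
  all (fun i => ~~ nth false st i) boundary && all (fun l => count (nth false st) l == 1) incidences.

Fixpoint bitseqs (n : nat) : seq bitseq :=
  if n is n'.+1 then [seq b :: bs | b <- [:: false; true], bs <- bitseqs n'] else [:: [::]].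

Lemma mem_bitseqs n st : (st \in bitseqs n) = (size st == n).
Proof.
elim: n st => [|n IH] st; first by case: st.
apply/allpairsP/idP => [[[b bs] [_ + ->]] | ]; first by rewrite IH.
by case: st => // b st; rewrite /= eqSS -IH; exists (b, st); split => //; case: b.
Qed.

(* Point-free on purpose: the index lists are then computed once, not once per
   bit vector, when [matchings] is evaluated. *)
Definition matchings : seq bitseq :=
  filter (semi_default_bits [seq edge_index x | x <- boundary_pairs]
                            [seq incidence v | v <- lverts & inner v])
         (bitseqs (size ladder_pairs)).

Lemma semi_default_matching S : semi_default S -> edge_bits S \in matchings.
Proof.
case; rewrite !avE ?bvE // => a01 b01 a56 b56 degree1.
rewrite mem_filter mem_bitseqs !size_map eqxx andbT /semi_default_bits !all_map all_filter.
apply/andP; split.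
  by apply/allP => x; rewrite !inE => /or4P[]/eqP->.
apply/allP => v _; apply/implyP => inner_v /=.
by rewrite -card_incident_edges degree1.
Qed.

Definition wb_side (top : bool) (p : seq lvert) : Prop := if top then wb_top p else wb_bottom p.

Lemma wb_side_lpath top p : wb_side top p -> lpath p.
Proof. by case: top => -[]. Qed.

Lemma wb_side_well_behaved top p : wb_side top p -> well_behaved p.
Proof. by case: top => ?; [right | left]. Qed.

Lemma wb_side_pair top P Q : wb_side top P -> wb_side top Q ->
  (wb_top P /\ wb_top Q) \/ (wb_bottom P /\ wb_bottom Q).
Proof. by case: top => wb_P wb_Q; [left | right]. Qed.

Definition side_path (top : bool) (q : seq lvert) : seq lvert :=
  if top then [:: vtx false 6, vtx false 5 & q ++ [:: vtx true 5; vtx true 6]]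
  else [:: vtx false 0, vtx false 1 & q ++ [:: vtx true 1; vtx true 0]].

(* The inner part a_2 ... a_(k+1) b_(k+1) ... b_2 of a U-shaped path, with
   columns counted from the top side when [top] holds. *)
Definition turn (top : bool) (k : nat) : seq lvert :=
  let col i := if top then 6 - i else i in
  [seq vtx false (col i) | i <- iota 2 k] ++ [seq vtx true (col i) | i <- rev (iota 2 k)].

Definition flip_paths (top : bool) : seq (seq lvert) :=
  [seq side_path top (turn top k) | k <- iota 0 5].

Lemma flip_paths_valid top :
  all (fun k => lpath (side_path top (turn top k)) && all inner (turn top k)) (iota 0 5).
Proof. by case: top; vm_compute. Qed.

Lemma side_path_wb top q :
  lpath (side_path top q) -> all inner q -> wb_side top (side_path top q).
Proof. by case: top => path_q inner_q; split => //; exists q; rewrite !avE ?bvE. Qed.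

Lemma flip_paths_wb top p : p \in flip_paths top -> wb_side top p.
Proof.
case/mapP => k /(allP (flip_paths_valid top)) /andP[path_k inner_k] ->.
exact: side_path_wb.
Qed.

Definition flips2 (st : bitseq) (top : bool) : seq bitseq :=
  [seq flip (flip st p) q | p <- [seq p <- flip_paths top | alt st p],
                            q <- [seq q <- flip_paths top | alt (flip st p) q]].

Lemma flips2P S top t : t \in flips2 (edge_bits S) top ->
  exists P1 P2, [/\ wb_flip_seq S [:: P1; P2], wb_side top P1, wb_side top P2 &
                    edge_bits (apply_flips S [:: P1; P2]) = t].
Proof.
case/allpairsPdep => p [q []]; rewrite !mem_filter => /andP[alt_p /flip_paths_wb wb_p].
rewrite -edge_bits_symdiff => /andP[alt_q /flip_paths_wb wb_q] ->.
have [path_p path_q] := (wb_side_lpath wb_p, wb_side_lpath wb_q).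
exists p, q; split; rewrite ?edge_bits_symdiff //= !alternating_edge_bits //.
by split=> //; [exact: wb_side_well_behaved wb_p | split=> //; exact: wb_side_well_behaved wb_q].
Qed.

Lemma apply_flips_cat S ps qs :
  apply_flips S (ps ++ qs) = apply_flips (apply_flips S ps) qs.
Proof. exact: foldl_cat. Qed.

Lemma wb_flip_seq_cat S ps qs :
  wb_flip_seq S (ps ++ qs) <-> wb_flip_seq S ps /\ wb_flip_seq (apply_flips S ps) qs.
Proof.
elim: ps S => [|p ps IH] S /=; first by split=> [|[]].
split=> [[? ?] | [[? ? ?] ?]].
  by case/IH.
by split=> //; apply/IH.
Qed.

Definition four_flip_connected (ms : seq bitseq) : bool :=
  all (fun m1 => all (fun m2 =>
    has (fun top => has (fun t => has (fun top' => m2 \in flips2 t top') [:: false; true])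
                        (flips2 m1 top)) [:: false; true]) ms) ms.

Lemma matchings_four_flip_connected : four_flip_connected matchings.
Proof. by vm_compute. Qed.

Theorem mainTheorem12 (S1 S2 : {set {set lvert}}) :
  semi_default S1 -> semi_default S2 ->
  exists P1 P2 P3 P4 : seq lvert,
    [/\ wb_flip_seq S1 [:: P1; P2; P3; P4],
        apply_flips S1 [:: P1; P2; P3; P4] :&: EL = S2 :&: EL,
        (wb_top P1 /\ wb_top P2) \/ (wb_bottom P1 /\ wb_bottom P2) &
        (wb_top P3 /\ wb_top P4) \/ (wb_bottom P3 /\ wb_bottom P4)].
Proof.
move=> /semi_default_matching m1 /semi_default_matching m2.
have /hasP[top _ /hasP[t t12 /hasP[top' _ t2]]] :=
  allP (allP matchings_four_flip_connected _ m1) _ m2.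
have [P1 [P2 [flips12 wb1 wb2 bits12]]] := flips2P t12.
rewrite -bits12 in t2; have [P3 [P4 [flips34 wb3 wb4 bits34]]] := flips2P t2.
exists P1, P2, P3, P4; split; [| | exact: wb_side_pair wb1 wb2 | exact: wb_side_pair wb3 wb4].
- by apply/(wb_flip_seq_cat S1 [:: P1; P2] [:: P3; P4]).
- by apply: edge_bits_EL; rewrite (apply_flips_cat S1 [:: P1; P2] [:: P3; P4]) bits34.
Qed.
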